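(* Let $n\ge2$, $f\in C^n(\mathbb{R})$, $2\le\kappa\le n$, $\alpha=(\alpha_0,\dots,\alpha_\kappa)\in\mathbb{N}_{\ge0}^{\kappa+1}$ with $|\alpha|\le n+1$, and $(\lambda_0,\dots,\lambda_\kappa)\in\mathbb{R}^{\kappa+1}$ such that for some $i\ne j$ we have $\lambda_i\ne\lambda_j$ and $\alpha_i,\alpha_j>0$. Then for every $k\in\{0,\dots,\kappa\}\setminus\{i,j\}$, \begin{align*} f[\lambda_i^{(\alpha_i)},\lambda_k^{(\alpha_k)},\lambda_j^{(\alpha_j)},\widetilde\lambda^{(\widetilde\alpha)}] =&\sum_{l=0}^{\alpha_i-1}p_{\alpha_j,l}\Big(\frac{\lambda_i-\lambda_k}{\lambda_i-\lambda_j}\Big) f[\lambda_i^{(\alpha_i-l)},\lambda_k^{(\alpha_k+\alpha_j+l)},\widetilde\lambda^{(\widetilde\alpha)}]\\ &+\sum_{l=0}^{\alpha_j-1}p_{\alpha_i,l}\Big(\frac{\lambda_k-\lambda_j}{\lambda_i-\lambda_j}\Big) f[\lambda_k^{(\alpha_k+\alpha_i+l)},\lambda_j^{(\alpha_j-l)},\widetilde\lambda^{(\widetilde\alpha)}], \end{align*} where $\widetilde\lambda^{(\widetilde\alpha)}$ denotes the list of the remaining variables $\lambda_m^{(\alpha_m)}$, $m\in\{0,\dots,\kappa\}\setminus\{i,j,k\}$, and $p_{a,l}(x)=\binom{a+l-1}{l}x^{a}(1-x)^{l}$.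
   Context: Divided differences: for $f\in C^n(\mathbb{R})$ set $f^{[0]}=f$ and for $1\le k\le n$, $f^{[k]}(\lambda_0,\lambda_1,\lambda)=\frac{f^{[k-1]}(\lambda_0,\lambda)-f^{[k-1]}(\lambda_1,\lambda)}{\lambda_0-\lambda_1}$ if $\lambda_0\ne\lambda_1$, and $=\frac{d}{d\mu}f^{[k-1]}(\mu,\lambda)|_{\mu=\lambda_0}$ if $\lambda_0=\lambda_1$; these are symmetric in their arguments. Notation: for reals $\mu_0,\dots,\mu_m$ and nonnegative integers $\beta_0,\dots,\beta_m$ with $N=\sum\beta_r\ge1$, $f[\mu_0^{(\beta_0)},\dots,\mu_m^{(\beta_m)}]:=f^{[N-1]}$ evaluated at the list in which $\mu_r$ is repeated $\beta_r$ times. *)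

From Stdlib Require Import Reals List Arith.
From Coquelicot Require Import Coquelicot.
Import ListNotations.
Open Scope R_scope.

Definition Cn (n : nat) (f : R -> R) : Prop :=
  (forall (m : nat) (x : R), (m <= n)%nat -> ex_derive_n f m x) /\
  (forall x : R, continuous (Derive_n f n) x).

(* ddk f k l = f^{[k]} evaluated at the list l (expected length k+1).
   f^{[0]} = f;  f^{[k]}(x0,x1,rest) = (f^{[k-1]}(x0,rest) - f^{[k-1]}(x1,rest))/(x0-x1)
   if x0 <> x1, and d/dmu f^{[k-1]}(mu,rest) at mu = x0 if x0 = x1. *)
Fixpoint ddk (f : R -> R) (k : nat) (l : list R) : R :=
  match k with
  | O => f (hd 0 l)
  | S k' =>
      match l with
      | x0 :: x1 :: rest =>
          if Req_EM_T x0 x1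
          then Derive (fun mu => ddk f k' (mu :: rest)) x0
          else (ddk f k' (x0 :: rest) - ddk f k' (x1 :: rest)) / (x0 - x1)
      | _ => 0
      end
  end.

Definition dd (f : R -> R) (l : list R) : R := ddk f (length l - 1) l.

(* The list mu_0^(beta_0), ..., mu_m^(beta_m) given as a list of blocks. *)
Definition blocks (bs : list (R * nat)) : list R :=
  flat_map (fun p => repeat (fst p) (snd p)) bs.

Definition sumR (n : nat) (g : nat -> R) : R :=
  fold_right Rplus 0 (map g (seq 0 n)).

Definition sumN (n : nat) (g : nat -> nat) : nat :=
  fold_right Nat.add 0%nat (map g (seq 0 n)).

Definition pal (a l : nat) (x : R) : R :=
  Binomial.C (a + l - 1) l * x ^ a * (1 - x) ^ l.

Definition rest_blocks (kappa : nat) (lam : nat -> R) (alpha : nat -> nat)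
  (i j k : nat) : list (R * nat) :=
  map (fun m => (lam m, alpha m))
    (filter (fun m => negb (Nat.eqb m i || Nat.eqb m j || Nat.eqb m k))
       (seq 0 (S kappa))).

From Stdlib Require Import Reals List Lra Lia Permutation.
From Coquelicot Require Import Coquelicot.
Import ListNotations.
Open Scope R_scope.

(* For distinct nodes a <> b the divided differences satisfy the three-point identity
   (a - b) f[a,b,S] = (a - c) f[a,c,S] + (c - b) f[c,b,S].  Since divided differences of a
   C^n function are symmetric, this turns into a recurrence for
   F(a,b) = f[l_i^(a), l_k^(N-a-b), l_j^(b), rest]:
   F(a+1,b+1) = x F(a+1,b) + (1-x) F(a,b+1) with x = (l_i - l_k)/(l_i - l_j).
   Unrolling it until one of the outer multiplicities vanishes is a weighted count of lattice
   paths, which produces the negative binomial weights p_{a,l}.  Symmetry at coincident nodes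
   needs mu |-> f^[m](mu, r) to be C^(n-m); this follows from Hadamard's representation
   (h(mu) - h(x))/(mu - x) = int_0^1 h'(x + t(mu - x)) dt. *)

Definition seg_moment (x : R) (p : nat) (v : R -> R) (mu : R) : R :=
  RInt (fun t => t ^ p * v (x + t * (mu - x))) 0 1.

Lemma continuity_2d_pt_seg_integrand x p (w : R -> R) mu t :
  continuous w (x + t * (mu - x)) ->
  continuity_2d_pt (fun mu t => t ^ p * w (x + t * (mu - x))) mu t.
Proof.
  intros Hw.
  apply continuity_2d_pt_mult.
  - apply (continuity_1d_2d_pt_comp (fun z => z ^ p) (fun _ t => t)).
    + apply derivable_continuous_pt, derivable_pt_pow.
    + apply continuity_2d_pt_id2.
  - apply (continuity_1d_2d_pt_comp w (fun mu t => x + t * (mu - x))).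
    + now apply continuity_pt_filterlim.
    + apply continuity_2d_pt_plus; [apply continuity_2d_pt_const |].
      apply continuity_2d_pt_mult; [apply continuity_2d_pt_id2 |].
      apply continuity_2d_pt_minus; [apply continuity_2d_pt_id1 | apply continuity_2d_pt_const].
Qed.

Lemma ex_RInt_seg_integrand x p (w : R -> R) mu : (forall z, continuous w z) ->
  ex_RInt (fun t => t ^ p * w (x + t * (mu - x))) 0 1.
Proof.
  intros Hw. apply (ex_RInt_continuous (V := R_CompleteNormedModule)). intros t _.
  apply (continuous_mult (fun t => t ^ p) (fun t => w (x + t * (mu - x)))).
  - apply continuity_pt_filterlim, derivable_continuous_pt, derivable_pt_pow.
  - apply (continuous_comp (fun t => x + t * (mu - x)) w); [| apply Hw].
    apply continuity_pt_filterlim. reg.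
Qed.

Lemma seg_moment_continuous x p (w : R -> R) : (forall z, continuous w z) ->
  forall mu, continuous (seg_moment x p w) mu.
Proof.
  intros Hw mu0. apply continuity_pt_filterlim. intros eps Heps.
  destruct (uniform_continuity_2d_1d' (fun mu t => t ^ p * w (x + t * (mu - x))) 0 1 mu0)
    with (eps := mkposreal (eps / 2) ltac:(lra)) as [d Hd].
  { intros t _. apply continuity_2d_pt_seg_integrand, Hw. }
  exists d. split; [apply cond_pos |].
  intros mu [_ Hmu]. simpl in Hmu |- *. unfold R_dist in Hmu |- *.
  apply Rabs_def2 in Hmu.
  unfold seg_moment.
  rewrite <- (RInt_minus (V := R_CompleteNormedModule)) by apply ex_RInt_seg_integrand, Hw.
  eapply Rle_lt_trans; [apply (abs_RInt_le_const _ 0 1 (eps / 2)) | lra].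
  - lra.
  - apply (ex_RInt_minus (V := R_CompleteNormedModule)); apply ex_RInt_seg_integrand, Hw.
  - intros t Ht. apply Rlt_le.
    apply (Hd t mu0 t mu); simpl; try lra.
    rewrite Rminus_eq_0, Rabs_R0. apply cond_pos.
Qed.

Lemma is_derive_seg_integrand x p (v : R -> R) t mu : ex_derive v (x + t * (mu - x)) ->
  is_derive (fun z => t ^ p * v (x + t * (z - x))) mu (t ^ S p * Derive v (x + t * (mu - x))).
Proof.
  intros Hv. auto_derive; [exact Hv |].
  simpl. change (fun y => v y) with v. unfold Rminus. ring.
Qed.

Lemma is_derive_seg_moment x p (v : R -> R) :
  (forall z, ex_derive v z) -> (forall z, continuous (Derive v) z) ->
  forall mu, is_derive (seg_moment x p v) mu (seg_moment x (S p) (Derive v) mu).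
Proof.
  intros Hv Hdv mu.
  assert (Hw : forall z, continuous v z).
  { intros z. apply (ex_derive_continuous (K := R_AbsRing) (V := R_NormedModule)), Hv. }
  unfold seg_moment.
  rewrite <- (RInt_ext (fun t => Derive (fun z => t ^ p * v (x + t * (z - x))) mu)).
  2: { intros t _. apply is_derive_unique, is_derive_seg_integrand, Hv. }
  apply (is_derive_RInt_param (fun z t => t ^ p * v (x + t * (z - x)))).
  - apply filter_forall. intros z t _. eexists. apply is_derive_seg_integrand, Hv.
  - intros t _.
    apply (continuity_2d_pt_ext (fun z t => t ^ S p * Derive v (x + t * (z - x)))).
    + intros z s. symmetry. apply is_derive_unique, is_derive_seg_integrand, Hv.
    + apply continuity_2d_pt_seg_integrand, Hdv.
  - apply filter_forall. intros z. apply ex_RInt_seg_integrand, Hw.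
Qed.

Lemma Cn_ext s (g1 g2 : R -> R) : (forall t, g1 t = g2 t) -> Cn s g1 -> Cn s g2.
Proof.
  intros E [Hd Hc]. split.
  - intros m z Hm. apply (ex_derive_n_ext g1); [exact E | apply Hd, Hm].
  - intros z. apply (continuous_ext (Derive_n g1 s)); [| apply Hc].
    intros t. apply Derive_n_ext, E.
Qed.

Lemma Cn_continuous s (g : R -> R) : Cn s g -> forall z, continuous g z.
Proof.
  intros [Hd Hc] z. destruct s as [| s]; [apply Hc |].
  apply (ex_derive_continuous (K := R_AbsRing) (V := R_NormedModule)).
  apply (Hd 1%nat z). lia.
Qed.

Lemma Cn_ex_derive s (g : R -> R) : Cn (S s) g -> forall z, ex_derive g z.
Proof. intros [Hd _] z. apply (Hd 1%nat z). lia. Qed.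

Lemma Cn_Derive s (h : R -> R) : Cn (S s) h -> Cn s (Derive h).
Proof.
  intros [Hd Hc].
  assert (E : forall m z, Derive_n (Derive h) m z = Derive_n h (S m) z).
  { intros m z. rewrite <- Nat.add_1_r, <- Derive_n_comp. reflexivity. }
  split.
  - intros [| m] z Hm; [exact I |].
    apply (ex_derive_ext (Derive_n h (S m))); [intros t; symmetry; apply E |].
    apply (Hd (S (S m)) z). lia.
  - intros z. apply (continuous_ext (Derive_n h (S s))); [intros t; symmetry; apply E | apply Hc].
Qed.

Lemma Derive_n_seg_moment x p s (u : R -> R) : Cn s u -> forall q, (q <= s)%nat ->
  (forall mu, ex_derive_n (seg_moment x p u) q mu) /\
  (forall mu, Derive_n (seg_moment x p u) q mu = seg_moment x (q + p) (Derive_n u q) mu).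
Proof.
  intros [Hd Hc]. induction q as [| q IH]; intros Hq; [split; reflexivity |].
  destruct IH as [_ IH]; [lia |].
  assert (Hv : forall z, ex_derive (Derive_n u q) z) by (intros z; apply (Hd (S q) z Hq)).
  assert (Hdv : forall z, continuous (Derive (Derive_n u q)) z).
  { intros z. destruct (Nat.eq_dec (S q) s) as [<- | Ne]; [apply Hc |].
    apply (ex_derive_continuous (K := R_AbsRing) (V := R_NormedModule)).
    apply (Hd (S (S q)) z). lia. }
  split; intros mu; simpl.
  - apply (ex_derive_ext (seg_moment x (q + p) (Derive_n u q))); [intros t; symmetry; apply IH |].
    eexists. apply is_derive_seg_moment; assumption.
  - rewrite (Derive_ext _ _ _ IH).
    apply is_derive_unique, is_derive_seg_moment; assumption.
Qed.

Lemma Cn_seg_moment x p s (u : R -> R) : Cn s u -> Cn s (seg_moment x p u).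
Proof.
  intros Hu. split.
  - intros m z Hm. apply (Derive_n_seg_moment x p s u Hu m Hm).
  - intros z. apply (continuous_ext (seg_moment x (s + p) (Derive_n u s))).
    + intros t. symmetry. apply (Derive_n_seg_moment x p s u Hu s (le_n s)).
    + apply seg_moment_continuous, Hu.
Qed.

Definition diff_quot (h : R -> R) (x mu : R) : R :=
  if Req_EM_T mu x then Derive h x else (h mu - h x) / (mu - x).

Lemma diff_quot_seg_moment (h : R -> R) x mu :
  (forall z, ex_derive h z) -> (forall z, continuous (Derive h) z) ->
  diff_quot h x mu = seg_moment x 0 (Derive h) mu.
Proof.
  intros Hd Hc. unfold diff_quot, seg_moment. destruct (Req_EM_T mu x) as [-> | Ne].
  - rewrite (RInt_ext _ (fun _ => Derive h x)), RInt_const.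
    + unfold scal; simpl; unfold mult; simpl. ring.
    + intros t _. replace (x + t * (x - x)) with x by ring. apply Rmult_1_l.
  - symmetry. apply is_RInt_unique.
    replace ((h mu - h x) / (mu - x)) with
      (minus (h (x + 1 * (mu - x)) / (mu - x)) (h (x + 0 * (mu - x)) / (mu - x)))
      by (unfold minus, plus, opp; simpl; replace (x + 1 * (mu - x)) with mu by ring;
          replace (x + 0 * (mu - x)) with x by ring; field; lra).
    apply (is_RInt_derive (V := R_CompleteNormedModule)
      (fun t => h (x + t * (mu - x)) / (mu - x))).
    + intros t _. auto_derive; [apply Hd |].
      change (fun y => h y) with h. simpl. field. lra.
    + intros t _.
      apply (continuous_mult (fun t => t ^ 0) (fun t => Derive h (x + t * (mu - x))));
        [apply continuous_const |].
      apply (continuous_comp (fun t => x + t * (mu - x)) (Derive h)); [| apply Hc].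
      apply continuity_pt_filterlim. reg.
Qed.

Lemma Cn_diff_quot s (h : R -> R) x : Cn (S s) h -> Cn s (diff_quot h x).
Proof.
  intros Hh.
  apply (Cn_ext s (seg_moment x 0 (Derive h))).
  - intros mu. symmetry. apply diff_quot_seg_moment;
      [apply (Cn_ex_derive s) | apply (Cn_continuous s), Cn_Derive]; exact Hh.
  - apply Cn_seg_moment, Cn_Derive, Hh.
Qed.

Lemma ddk_cons_cons f m a b l : ddk f (S m) (a :: b :: l) =
  if Req_EM_T a b then Derive (fun mu => ddk f m (mu :: l)) a
  else (ddk f m (a :: l) - ddk f m (b :: l)) / (a - b).
Proof. reflexivity. Qed.

Lemma ddk_diff_quot f m x r mu :
  ddk f (S m) (mu :: x :: r) = diff_quot (fun nu => ddk f m (nu :: r)) x mu.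
Proof. unfold diff_quot. rewrite ddk_cons_cons. now destruct (Req_EM_T mu x) as [-> |]. Qed.

Lemma Cn_ddk n f : Cn n f -> forall m r, length r = m -> (m <= n)%nat ->
  Cn (n - m) (fun mu => ddk f m (mu :: r)).
Proof.
  intros Hf m. induction m as [| m IH]; intros r Hr Hm.
  - rewrite Nat.sub_0_r. exact Hf.
  - destruct r as [| x r]; [discriminate |].
    apply (Cn_ext _ (diff_quot (fun nu => ddk f m (nu :: r)) x)).
    + intros mu. symmetry. apply ddk_diff_quot.
    + apply Cn_diff_quot. replace (S (n - S m)) with (n - m)%nat by lia.
      apply IH; simpl in Hr; lia.
Qed.

Lemma Derive_ddk_off_node f m (l : list R) (a b : R) :
  ex_derive (fun mu => ddk f m (mu :: l)) a -> a <> b ->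
  Derive (fun mu => ddk f (S m) (mu :: b :: l)) a =
  (Derive (fun mu => ddk f m (mu :: l)) a * (a - b) - (ddk f m (a :: l) - ddk f m (b :: l)))
  / (a - b) ^ 2.
Proof.
  intros Hd Hab. set (G := fun mu => ddk f m (mu :: l)).
  apply is_derive_unique.
  apply (is_derive_ext_loc (fun mu => (G mu - G b) / (mu - b))).
  - apply (filter_imp (fun mu => mu <> b)); [| exact (open_neq b a Hab)].
    intros mu Hmu. rewrite ddk_cons_cons. now destruct (Req_EM_T mu b).
  - auto_derive; [repeat split; [exact Hd | lra] |].
    unfold G; cbv beta. field. lra.
Qed.

Lemma ddk_swap12 f k x y l : ddk f (S k) (x :: y :: l) = ddk f (S k) (y :: x :: l).
Proof.
  rewrite !ddk_cons_cons.
  destruct (Req_EM_T x y), (Req_EM_T y x); [now subst | congruence | congruence |].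
  field. lra.
Qed.

Lemma ddk_repeated_head f k x z l : ex_derive (fun mu => ddk f k (mu :: l)) x -> x <> z ->
  ddk f (S (S k)) (x :: x :: z :: l) = ddk f (S (S k)) (x :: z :: x :: l).
Proof.
  intros Hd Nxz.
  rewrite (ddk_cons_cons f (S k) x x), (ddk_cons_cons f (S k) x z).
  destruct (Req_EM_T x x) as [_ | C]; [| congruence].
  destruct (Req_EM_T x z) as [C | _]; [congruence |].
  rewrite Derive_ddk_off_node by assumption.
  rewrite (ddk_cons_cons f k x x), (ddk_cons_cons f k z x).
  destruct (Req_EM_T x x) as [_ | C]; [| congruence].
  destruct (Req_EM_T z x) as [C | _]; [congruence |].
  field. lra.
Qed.

Lemma ddk_swap23 f k x y z l : (forall a, ex_derive (fun mu => ddk f k (mu :: l)) a) ->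
  ddk f (S (S k)) (x :: y :: z :: l) = ddk f (S (S k)) (x :: z :: y :: l).
Proof.
  intros Hd.
  destruct (Req_EM_T x y) as [<- | Nxy], (Req_EM_T x z) as [<- | Nxz].
  - reflexivity.
  - apply ddk_repeated_head; auto.
  - symmetry. apply ddk_repeated_head; auto.
  - destruct (Req_EM_T y z) as [<- | Nyz]; [reflexivity |].
    rewrite !ddk_cons_cons.
    repeat match goal with |- context [Req_EM_T ?a ?b] =>
      destruct (Req_EM_T a b); [congruence |] end.
    field. lra.
Qed.

Section Symmetry.

Variables (n : nat) (f : R -> R).
Hypothesis Hf : Cn n f.

Lemma ddk_perm_tail k : (S k <= n)%nat ->
  (forall l l', length l = S k -> Permutation l l' -> ddk f k l = ddk f k l') ->
  forall x l l', length l = S k -> Permutation l l' -> ddk f (S k) (x :: l) = ddk f (S k) (x :: l').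
Proof.
  intros Hk IH x l l' Hl Hp. revert Hl.
  induction Hp as [| y l l' Hp _ | y z l | l l' l'' Hp IHp Hp' IHp']; intros Hl.
  - reflexivity.
  - assert (E : forall mu, ddk f k (mu :: l) = ddk f k (mu :: l')).
    { intros mu. apply IH; [simpl in *; lia | now apply perm_skip]. }
    rewrite !ddk_cons_cons.
    destruct (Req_EM_T x y); [apply Derive_ext, E | now rewrite !E].
  - destruct k as [| k]; [simpl in Hl; lia |].
    apply ddk_swap23. intros a.
    apply (Cn_ex_derive (n - S k)). replace (S (n - S k)) with (n - k)%nat by lia.
    apply Cn_ddk; [exact Hf | simpl in Hl; lia | lia].
  - rewrite IHp by exact Hl. apply IHp'. now rewrite <- (Permutation_length Hp).
Qed.

Lemma ddk_perm k : (k <= n)%nat ->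
  forall l l', length l = S k -> Permutation l l' -> ddk f k l = ddk f k l'.
Proof.
  induction k as [| k IH]; intros Hk l l' Hl Hp.
  - destruct l as [| a [| b l]]; simpl in Hl; try lia.
    apply Permutation_length_1_inv in Hp. now subst.
  - revert Hl. induction Hp as [| x l l' Hp _ | y x l | l l' l'' Hp IHp Hp' IHp']; intros Hl.
    + reflexivity.
    + apply ddk_perm_tail; [lia | apply IH; lia | simpl in Hl; lia | exact Hp].
    + apply ddk_swap12.
    + rewrite IHp by exact Hl. apply IHp'. now rewrite <- (Permutation_length Hp).
Qed.

Lemma dd_perm l l' : Permutation l l' -> (length l' <= S n)%nat -> dd f l = dd f l'.
Proof.
  intros Hp Hl. unfold dd. rewrite (Permutation_length Hp).
  destruct l' as [| a l']; [apply Permutation_sym, Permutation_nil in Hp; now subst |].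
  apply ddk_perm; [simpl in *; lia | rewrite (Permutation_length Hp); simpl; lia | exact Hp].
Qed.

End Symmetry.

Lemma ddk_three_point f m a b c l : a <> b ->
  (a - b) * ddk f (S m) (a :: b :: l)
  = (a - c) * ddk f (S m) (a :: c :: l) + (c - b) * ddk f (S m) (c :: b :: l).
Proof.
  intros Nab.
  destruct (Req_EM_T a c) as [<- | Nac]; [ring |].
  destruct (Req_EM_T c b) as [-> | Ncb]; [ring |].
  rewrite !ddk_cons_cons.
  repeat match goal with |- context [Req_EM_T ?a ?b] =>
    destruct (Req_EM_T a b); [congruence |] end.
  field. lra.
Qed.

Lemma blocks_cons x m bs : blocks ((x, m) :: bs) = repeat x m ++ blocks bs.
Proof. reflexivity. Qed.

Lemma dd_cons_cons f u v t : dd f (u :: v :: t) = ddk f (S (length t)) (u :: v :: t).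
Proof. reflexivity. Qed.

Lemma dd_blocks_recurrence n f p q r a c b bs : Cn n f -> p <> r ->
  (S a + c + S b + length (blocks bs) <= S n)%nat ->
  dd f (blocks ((p, S a) :: (q, c) :: (r, S b) :: bs))
  = (p - q) / (p - r) * dd f (blocks ((p, S a) :: (q, S c) :: (r, b) :: bs))
  + (q - r) / (p - r) * dd f (blocks ((p, a) :: (q, S c) :: (r, S b) :: bs)).
Proof.
  intros Hf Npr Hlen. rewrite !blocks_cons. cbn [repeat app].
  set (t := repeat p a ++ repeat q c ++ repeat r b ++ blocks bs).
  assert (Ht : (S (S (length t)) <= S n)%nat).
  { unfold t. rewrite !length_app, !repeat_length. lia. }
  assert (Pr : Permutation (r :: t) (repeat p a ++ repeat q c ++ r :: repeat r b ++ blocks bs)).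
  { rewrite app_assoc. apply Permutation_cons_app. now rewrite <- app_assoc. }
  assert (Ppr : Permutation (p :: repeat p a ++ repeat q c ++ r :: repeat r b ++ blocks bs)
                  (p :: r :: t)) by apply perm_skip, Permutation_sym, Pr.
  assert (Ppq : Permutation (p :: repeat p a ++ q :: repeat q c ++ repeat r b ++ blocks bs)
                  (p :: q :: t)) by apply perm_skip, Permutation_sym, Permutation_cons_app, Permutation_refl.
  assert (Pqr : Permutation (repeat p a ++ q :: repeat q c ++ r :: repeat r b ++ blocks bs)
                  (q :: r :: t)) by apply Permutation_sym, Permutation_cons_app, Pr.
  rewrite (dd_perm n f Hf _ _ Ppr), (dd_perm n f Hf _ _ Ppq), (dd_perm n f Hf _ _ Pqr)
    by (simpl; lia).
  rewrite !dd_cons_cons.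
  apply (Rmult_eq_reg_l (p - r)); [| lra].
  rewrite (ddk_three_point f _ p r q) by exact Npr. field. lra.
Qed.

Lemma sumR_S n g : sumR (S n) g = g 0%nat + sumR n (fun l => g (S l)).
Proof. unfold sumR. simpl. f_equal. now rewrite <- seq_shift, map_map. Qed.

Lemma sumR_ext n g h : (forall l, (l < n)%nat -> g l = h l) -> sumR n g = sumR n h.
Proof.
  intros H. unfold sumR. f_equal. apply map_ext_in. intros l Hl.
  apply in_seq in Hl. apply H. lia.
Qed.

Lemma sumR_plus n g h : sumR n (fun l => g l + h l) = sumR n g + sumR n h.
Proof. unfold sumR. induction (seq 0 n) as [| l s IH]; simpl; [ring | rewrite IH; ring]. Qed.

Lemma sumR_scal n c g : sumR n (fun l => c * g l) = c * sumR n g.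
Proof. unfold sumR. induction (seq 0 n) as [| l s IH]; simpl; [ring | rewrite IH; ring]. Qed.

(* Pascal's triangle in nat; unlike [Binomial.C], it vanishes above the diagonal. *)
Fixpoint binom (m k : nat) : nat :=
  match m, k with
  | _, O => 1%nat
  | O, S _ => 0%nat
  | S m', S k' => (binom m' k' + binom m' (S k'))%nat
  end.

Lemma binom_0_r m : binom m 0 = 1%nat.
Proof. now destruct m. Qed.

Lemma binom_small m k : (m < k)%nat -> binom m k = 0%nat.
Proof.
  revert k. induction m as [| m IH]; intros [| k] H; simpl; try lia; auto.
  rewrite !IH; lia.
Qed.

Lemma binom_C m k : (k <= m)%nat -> INR (binom m k) = Binomial.C m k.
Proof.
  revert k. induction m as [| m IH]; intros [| k] H.
  - now rewrite C_n_0.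
  - lia.
  - now rewrite binom_0_r, C_n_0.
  - simpl binom. rewrite plus_INR.
    destruct (Nat.eq_dec k m) as [-> | Ne].
    + rewrite (binom_small m (S m)), IH, !C_n_n by lia. simpl. ring.
    + rewrite !IH by lia. apply pascal. lia.
Qed.

Definition negbin (a l : nat) (z : R) : R := INR (binom (a + l - 1) l) * z ^ a * (1 - z) ^ l.

Lemma negbin_pal a l z : (1 <= a)%nat -> negbin a l z = pal a l z.
Proof. intros H. unfold negbin, pal. now rewrite binom_C by lia. Qed.

Lemma negbin_0_0 z : negbin 0 0 z = 1.
Proof. unfold negbin. simpl. ring. Qed.

Lemma negbin_0_S l z : negbin 0 (S l) z = 0.
Proof. unfold negbin. rewrite binom_small by lia. simpl. ring. Qed.

Lemma negbin_S_0 b z : negbin (S b) 0 z = z * negbin b 0 z.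
Proof. unfold negbin. rewrite !binom_0_r. simpl. ring. Qed.

Lemma negbin_S_S b l z :
  negbin (S b) (S l) z = z * negbin b (S l) z + (1 - z) * negbin (S b) l z.
Proof.
  unfold negbin. replace (S b + S l - 1)%nat with (S (b + l)) by lia.
  replace (b + S l - 1)%nat with (b + l)%nat by lia.
  replace (S b + l - 1)%nat with (b + l)%nat by lia.
  simpl binom. rewrite plus_INR. simpl pow. ring.
Qed.

Lemma sumR_negbin_0 n z (H : nat -> R) : sumR (S n) (fun l => negbin 0 l z * H l) = H 0%nat.
Proof.
  rewrite sumR_S, negbin_0_0, (sumR_ext _ _ (fun _ => 0 * 0)), sumR_scal.
  - ring.
  - intros l _. rewrite negbin_0_S. ring.
Qed.

Lemma sumR_negbin_S_S b n z (H : nat -> R) :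
  sumR n (fun l => negbin (S b) (S l) z * H l)
  = z * sumR n (fun l => negbin b (S l) z * H l) + (1 - z) * sumR n (fun l => negbin (S b) l z * H l).
Proof.
  rewrite <- !sumR_scal, <- sumR_plus. apply sumR_ext. intros l _.
  rewrite negbin_S_S. ring.
Qed.

(* Unrolling the recurrence follows lattice paths from (a, b) that lower b with weight x or
   a with weight 1 - x until one coordinate vanishes; [negbin] sums the weights of the paths
   reaching each point of the two axes. *)
Lemma lattice_path_expansion (G : nat -> nat -> R) (x : R) (M : nat) :
  (forall a b, (S a + S b <= M)%nat -> G (S a) (S b) = x * G (S a) b + (1 - x) * G a (S b)) ->
  forall a b, (1 <= a + b)%nat -> (a + b <= M)%nat ->
  G a b = sumR a (fun l => negbin b l x * G (a - l)%nat 0%nat)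
        + sumR b (fun l => negbin a l (1 - x) * G 0%nat (b - l)%nat).
Proof.
  intros Hrec a. induction a as [| a IHa]; intros b H1 HM.
  - destruct b as [| b]; [lia |]. rewrite sumR_negbin_0. unfold sumR. simpl. ring.
  - induction b as [| b IHb].
    + rewrite sumR_negbin_0. unfold sumR. simpl. ring.
    + rewrite Hrec, IHb, (IHa (S b)) by lia.
      rewrite !sumR_S. cbn [Nat.sub].
      rewrite !sumR_negbin_S_S, !negbin_S_0.
      replace (1 - (1 - x)) with x by ring. ring.
Qed.

Lemma length_blocks bs : length (blocks bs) = list_sum (map snd bs).
Proof.
  unfold blocks. rewrite length_flat_map. f_equal.
  apply map_ext. intros [x m]. apply repeat_length.
Qed.

Lemma list_sum_filter_compl (P : nat -> bool) (g : nat -> nat) s :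
  (list_sum (map g (filter P s)) + list_sum (map g (filter (fun m => negb (P m)) s))
   = list_sum (map g s))%nat.
Proof. induction s as [| m s IH]; simpl; [reflexivity |]. destruct (P m); simpl; lia. Qed.

Lemma length_rest_blocks kappa lam alpha i j k :
  (i <= kappa)%nat -> (j <= kappa)%nat -> (k <= kappa)%nat -> i <> j -> k <> i -> k <> j ->
  (length (blocks (rest_blocks kappa lam alpha i j k)) + alpha i + alpha j + alpha k
   = sumN (S kappa) alpha)%nat.
Proof.
  intros Hi Hj Hk Nij Nki Nkj. unfold rest_blocks.
  set (P := fun m => negb (Nat.eqb m i || Nat.eqb m j || Nat.eqb m k)).
  assert (Hijk : Permutation (filter (fun m => negb (P m)) (seq 0 (S kappa))) [i; j; k]).
  { apply NoDup_Permutation.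
    - apply NoDup_filter, seq_NoDup.
    - repeat constructor; simpl; intuition lia.
    - intros m. rewrite filter_In, in_seq. unfold P. rewrite Bool.negb_involutive.
      rewrite !Bool.orb_true_iff, !Nat.eqb_eq. simpl. intuition lia. }
  rewrite length_blocks, map_map, (map_ext _ alpha) by reflexivity.
  change (sumN (S kappa) alpha) with (list_sum (map alpha (seq 0 (S kappa)))).
  rewrite <- (list_sum_filter_compl P alpha (seq 0 (S kappa))).
  rewrite (Permutation_list_sum (Permutation_map alpha Hijk)).
  simpl. lia.
Qed.

Theorem corollary3p2 (n : nat) (f : R -> R) (kappa : nat)
  (alpha : nat -> nat) (lam : nat -> R) (i j : nat) :
  (2 <= n)%nat -> Cn n f ->
  (2 <= kappa)%nat -> (kappa <= n)%nat ->
  (sumN (S kappa) alpha <= S n)%nat ->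
  (i <= kappa)%nat -> (j <= kappa)%nat -> i <> j ->
  lam i <> lam j -> (0 < alpha i)%nat -> (0 < alpha j)%nat ->
  forall k : nat, (k <= kappa)%nat -> k <> i -> k <> j ->
  let rest := rest_blocks kappa lam alpha i j k in
  dd f (blocks ((lam i, alpha i) :: (lam k, alpha k) :: (lam j, alpha j) :: rest))
  = sumR (alpha i) (fun l =>
      pal (alpha j) l ((lam i - lam k) / (lam i - lam j)) *
      dd f (blocks ((lam i, (alpha i - l)%nat) :: (lam k, (alpha k + alpha j + l)%nat) :: rest)))
  + sumR (alpha j) (fun l =>
      pal (alpha i) l ((lam k - lam j) / (lam i - lam j)) *
      dd f (blocks ((lam k, (alpha k + alpha i + l)%nat) :: (lam j, (alpha j - l)%nat) :: rest))).
Proof.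
  intros _ Hf _ _ Hsum Hi Hj Nij Nlij Hai Haj k Hk Nki Nkj rest.
  pose proof (length_rest_blocks kappa lam alpha i j k Hi Hj Hk Nij Nki Nkj) as Hlen.
  fold rest in Hlen.
  set (N := (alpha i + alpha k + alpha j)%nat).
  set (G := fun a b =>
    dd f (blocks ((lam i, a) :: (lam k, (N - a - b)%nat) :: (lam j, b) :: rest))).
  set (x := (lam i - lam k) / (lam i - lam j)).
  assert (Hx : 1 - x = (lam k - lam j) / (lam i - lam j)) by (unfold x; field; lra).
  assert (Hrec : forall a b, (S a + S b <= N)%nat ->
    G (S a) (S b) = x * G (S a) b + (1 - x) * G a (S b)).
  { intros a b Hab. unfold G. rewrite Hx.
    replace (N - S a - b)%nat with (S (N - S a - S b)) by lia.
    replace (N - a - S b)%nat with (S (N - S a - S b)) by lia.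
    apply (dd_blocks_recurrence n); [exact Hf | exact Nlij | lia]. }
  transitivity (G (alpha i) (alpha j)).
  { unfold G. now replace (N - alpha i - alpha j)%nat with (alpha k) by lia. }
  rewrite (lattice_path_expansion G x N Hrec), <- Hx by lia.
  f_equal; apply sumR_ext; intros l Hl; rewrite negbin_pal by lia; unfold G.
  - now replace (N - (alpha i - l) - 0)%nat with (alpha k + alpha j + l)%nat by lia.
  - now replace (N - 0 - (alpha j - l))%nat with (alpha k + alpha i + l)%nat by lia.
Qed.
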